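(* Let $E$ be a fixed-point equation system whose formulas may contain $\min$, with interpretation $[\![E]\!]\colon\mathbb{E}(D)\to\mathbb{E}(D)$, and let $\eta'\in\mathbb{E}(D)$. Then $\eta'\le\mu[\![E]\!]$ if there exist: (a) a fixed-point equation system $E'$ (possibly with $\min$) over the same predicate variables with $[\![E']\!]\le[\![E]\!]$; (b) $u\in\mathbb{E}(D)$ with $[\![E'^{\max}]\!](u)\le u$; (c) a function $r\colon D\to[0,\infty)$ with $[\![\mathsf{D}E'^{\max}]\!](r)+u\le r$; and (d) $\eta'\le u$ with $\eta'\le[\![E']\!](\eta')$.
   Context: $\mathbb{E}(D)$ is the set of functions $D\to[0,\infty]$ with pointwise order and operations ($\infty+x=\infty$, $0\cdot\infty=0$, $r\cdot\infty=\infty$ for $r>0$); $\mu$ denotes least fixed point. Quantitative formulas over predicate variables $X_1,\dots,X_n$ ($X_j$ of type $D_j\to\Omega$): $F ::= X_j(\tilde e)\mid t\mid F_1+F_2\mid t\cdot F\mid \mathbf{if}\ \varphi\ \mathbf{then}\ F_1\ \mathbf{else}\ F_2\mid\min\{F_1,\dots,F_m\}$, with $\tilde e$ expressions, $t$ a $[0,\infty)$-valued term, $\varphi$ boolean; interpreted by $[\![X_j(e)]\!](\eta)(v)=\eta_j([\![e]\!](v))$, $[\![t]\!](\eta)(v)=[\![t]\!](v)$, pointwise sum, scalar product and minimum, and case distinction. A fixed-point equation system $E=\{X_i(\tilde x_i)=_\mu F_i\}_{i=1}^n$ has interpretation $[\![E]\!](\eta)=([\![F_1]\!](\eta),\dots,[\![F_n]\!](\eta))$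 on $\mathbb{E}(D)$, $D=\coprod_jD_j$. $E'^{\max}$ is obtained by replacing every $\min$ in $E'$ with $\max$ (pointwise maximum). $\mathsf{D}E$ applies to each right-hand side the syntactic transformation $\mathsf{D}(X_j(\tilde e))=X_j(\tilde e)$, $\mathsf{D}t=0$, $\mathsf{D}(F_1+F_2)=\mathsf{D}F_1+\mathsf{D}F_2$, $\mathsf{D}(t\cdot F)=t\cdot\mathsf{D}F$, $\mathsf{D}$ commuting with conditionals, $\min$ and $\max$. *)

From HB Require Import structures.
From mathcomp Require Import all_boot all_order all_algebra.
From mathcomp Require Import all_classical all_reals all_analysis.
Set Implicit Arguments. Unset Strict Implicit. Unset Printing Implicit Defensive.
Import Order.TTheory GRing.Theory Num.Theory.
Local Open Scope classical_set_scope.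
Local Open Scope ring_scope.

Section QForm.
Variables (R : realType) (n : nat) (Dom : 'I_n -> Type).

Definition Dsum := {j : 'I_n & Dom j}.

(* E(D): functions D -> [0,oo], represented as D -> \bar R with values >= 0 *)
Definition inED (V : Type) (f : V -> \bar R) : Prop := forall x, (0 <= f x)%E.

(* Quantitative formulas whose free (argument) variables range over V.
   QMax is only used for the transformed systems E'^max and D E'^max. *)
Inductive qform (V : Type) : Type :=
| QVar (j : 'I_n) (e : V -> Dom j)
| QConst (t : V -> R) (ht : forall v, 0 <= t v)
| QAdd (F1 F2 : qform V)
| QScale (t : V -> R) (ht : forall v, 0 <= t v) (F : qform V)
| QIte (phi : V -> bool) (F1 F2 : qform V)
| QMin (F : qform V) (Fs : seq (qform V))
| QMax (F : qform V) (Fs : seq (qform V)).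
Arguments QVar {V} j e.
Arguments QConst {V} t ht.
Arguments QAdd {V} F1 F2.
Arguments QScale {V} t ht F.
Arguments QIte {V} phi F1 F2.
Arguments QMin {V} F Fs.
Arguments QMax {V} F Fs.

Fixpoint qinterp (V : Type) (F : qform V) (eta : Dsum -> \bar R) (v : V)
  : \bar R :=
  match F with
  | QVar j e => eta (existT _ j (e v))
  | QConst t _ => (t v)%:E
  | QAdd F1 F2 => (qinterp F1 eta v + qinterp F2 eta v)%E
  | QScale t _ F => ((t v)%:E * qinterp F eta v)%E
  | QIte phi F1 F2 => if phi v then qinterp F1 eta v else qinterp F2 eta v
  | QMin F Fs => foldr (fun G acc => Order.min (qinterp G eta v) acc)
                       (qinterp F eta v) Fs
  | QMax F Fs => foldr (fun G acc => Order.max (qinterp G eta v) acc)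
                       (qinterp F eta v) Fs
  end.

(* formula without max (the grammar of the paper) *)
Fixpoint maxfree (V : Type) (F : qform V) : bool :=
  match F with
  | QVar _ _ | QConst _ _ => true
  | QAdd F1 F2 | QIte _ F1 F2 => maxfree F1 && maxfree F2
  | QScale _ _ F => maxfree F
  | QMin F Fs => maxfree F && all (@maxfree V) Fs
  | QMax _ _ => false
  end.

Fixpoint maxify (V : Type) (F : qform V) : qform V :=
  match F with
  | QVar j e => QVar j e
  | QConst t ht => QConst t ht
  | QAdd F1 F2 => QAdd (maxify F1) (maxify F2)
  | QScale t ht F => QScale t ht (maxify F)
  | QIte phi F1 F2 => QIte phi (maxify F1) (maxify F2)
  | QMin F Fs => QMax (maxify F) (map (@maxify V) Fs)
  | QMax F Fs => QMax (maxify F) (map (@maxify V) Fs)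
  end.

Lemma zero_nonneg (V : Type) : forall v : V, 0 <= (fun _ : V => (0 : R)) v.
Proof. by []. Qed.

Fixpoint Dtrans (V : Type) (F : qform V) : qform V :=
  match F with
  | QVar j e => QVar j e
  | QConst _ _ => QConst (fun _ => 0) (@zero_nonneg V)
  | QAdd F1 F2 => QAdd (Dtrans F1) (Dtrans F2)
  | QScale t ht F => QScale t ht (Dtrans F)
  | QIte phi F1 F2 => QIte phi (Dtrans F1) (Dtrans F2)
  | QMin F Fs => QMin (Dtrans F) (map (@Dtrans V) Fs)
  | QMax F Fs => QMax (Dtrans F) (map (@Dtrans V) Fs)
  end.

(* fixed-point equation systems  { X_i(x_i) =mu F_i }_{i < n} *)
Definition eqsys := forall i : 'I_n, qform (Dom i).

Definition sys_maxfree (E : eqsys) : Prop := forall i, maxfree (E i).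
Definition sys_max (E : eqsys) : eqsys := fun i => maxify (E i).
Definition sys_D (E : eqsys) : eqsys := fun i => Dtrans (E i).

Definition sys_interp (E : eqsys) (eta : Dsum -> \bar R) : Dsum -> \bar R :=
  fun d => qinterp (E (projT1 d)) eta (projT2 d).

Definition ple (f g : Dsum -> \bar R) : Prop := forall d, (f d <= g d)%E.

(* least fixed point of Phi on E(D) (Knaster-Tarski: pointwise infimum of
   all pre-fixed points in E(D)) *)
Definition lfp (Phi : (Dsum -> \bar R) -> (Dsum -> \bar R)) : Dsum -> \bar R :=
  fun d => ereal_inf [set eta d | eta in [set eta | inED eta /\ ple (Phi eta) eta]].

End QForm.

From Stdlib Require List.
From HB Require Import structures.
From mathcomp Require Import all_boot all_order all_algebra.
From mathcomp Require Import all_classical all_reals all_analysis.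
From mathcomp Require Import lra.
Import Order.TTheory GRing.Theory Num.Theory.
Local Open Scope ring_scope.

(* Let eta be a pre-fixed point of [[E]] in E(D); by (a) it is also one of [[E']].
   We show eta' <= eta + r/c for c = 1, 2, 3, ...  For c = 1 this is
   eta' <= u <= r.  Given the bound for c, put d = min(r/c, u), so eta' <= eta + d.
   Post-fixedness of eta' and the subadditivity
   [[F]](y + d) <= [[F]](y) + [[D F^max]](d) give eta' <= eta + [[D E'^max]](d),
   and [[D E'^max]](d) is bounded both by [[D E'^max]](r)/c (homogeneity) and by
   [[E'^max]](u) <= u, so (c) yields (c + 1) [[D E'^max]](d) <= r.  Letting
   c -> oo gives eta' <= eta, and eta' <= mu[[E]] since mu[[E]] is the infimum of
   the pre-fixed points. *)


Section QformInd.
Variables (R : realType) (n : nat) (Dom : 'I_n -> Type) (V : Type).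
Local Notation qf := (qform R Dom V).
Variable P : qf -> Prop.
Hypotheses
  (HVar : forall j e, P (@QVar R n Dom V j e))
  (HConst : forall t ht, P (@QConst R n Dom V t ht))
  (HAdd : forall F1 F2, P F1 -> P F2 -> P (QAdd F1 F2))
  (HScale : forall t ht F, P F -> P (@QScale R n Dom V t ht F))
  (HIte : forall phi F1 F2, P F1 -> P F2 -> P (QIte phi F1 F2))
  (HMin : forall F Fs, (forall G, List.In G (F :: Fs) -> P G) -> P (QMin F Fs))
  (HMax : forall F Fs, (forall G, List.In G (F :: Fs) -> P G) -> P (QMax F Fs)).

Fixpoint qform_nested_ind (F : qf) : P F :=
  let fix in_seq (s : seq qf) : forall G, List.In G s -> P G :=
    match s with
    | [::] => fun G (G_in : False) => False_ind _ G_in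
    | G' :: s' => fun G G_in =>
        match G_in with
        | or_introl eq_G => eq_ind G' P (qform_nested_ind G') G eq_G
        | or_intror G_in' => in_seq s' G G_in'
        end
    end in
  match F with
  | QVar j e => HVar j e
  | QConst t ht => HConst t ht
  | QAdd F1 F2 => HAdd F1 F2 (qform_nested_ind F1) (qform_nested_ind F2)
  | QScale t ht F => HScale t ht F (qform_nested_ind F)
  | QIte phi F1 F2 => HIte phi F1 F2 (qform_nested_ind F1) (qform_nested_ind F2)
  | QMin F Fs => HMin F Fs (in_seq (F :: Fs))
  | QMax F Fs => HMax F Fs (in_seq (F :: Fs))
  end.
End QformInd.

Section FoldMinMax.
Context {disp : Order.disp_t} {T : orderType disp} {A : Type}.
Variables (a0 : A) (s : seq A).
Local Open Scope order_scope.

Lemma foldr_min_mem (h : A -> T) :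
  exists2 a, List.In a (a0 :: s) & foldr (fun b m => Order.min (h b) m) (h a0) s = h a.
Proof.
elim: s => [|b s' [a a_in eq_fold]] /=; first by exists a0; [left|].
rewrite eq_fold minEle; case: ifP => _; first by exists b; [right; left|].
by exists a => //; case: a_in; [left|right; right].
Qed.

Lemma foldr_max_mem (h : A -> T) :
  exists2 a, List.In a (a0 :: s) & foldr (fun b m => Order.max (h b) m) (h a0) s = h a.
Proof.
elim: s => [|b s' [a a_in eq_fold]] /=; first by exists a0; [left|].
rewrite eq_fold maxEle; case: ifP => _; last by exists b; [right; left|].
by exists a => //; case: a_in; [left|right; right].
Qed.

Lemma foldr_min_le (h : A -> T) a :
  List.In a (a0 :: s) -> foldr (fun b m => Order.min (h b) m) (h a0) s <= h a.
Proof.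
elim: s => [[->|[]]//|b s' IH] a_in /=; rewrite ge_min; apply/orP.
by case: a_in => [a0a|[<-|a_in]]; [right; apply: IH; left|left|right; apply: IH; right].
Qed.

Lemma foldr_max_ge (h : A -> T) a :
  List.In a (a0 :: s) -> h a <= foldr (fun b m => Order.max (h b) m) (h a0) s.
Proof.
elim: s => [[->|[]]//|b s' IH] a_in /=; rewrite le_max; apply/orP.
by case: a_in => [a0a|[<-|a_in]]; [right; apply: IH; left|left|right; apply: IH; right].
Qed.

Lemma le_foldr_min (h h' : A -> T) :
  (forall a, List.In a (a0 :: s) -> h a <= h' a) ->
  foldr (fun b m => Order.min (h b) m) (h a0) s <=
  foldr (fun b m => Order.min (h' b) m) (h' a0) s.
Proof.
move=> le_h; have [a a_in ->] := foldr_min_mem h'.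
exact: le_trans (foldr_min_le h a a_in) (le_h a a_in).
Qed.

Lemma le_foldr_max (h h' : A -> T) :
  (forall a, List.In a (a0 :: s) -> h a <= h' a) ->
  foldr (fun b m => Order.max (h b) m) (h a0) s <=
  foldr (fun b m => Order.max (h' b) m) (h' a0) s.
Proof.
move=> le_h; have [a a_in ->] := foldr_max_mem h.
exact: le_trans (le_h a a_in) (foldr_max_ge h' a a_in).
Qed.
End FoldMinMax.
Arguments foldr_min_le {disp T A a0 s} h {a}.
Arguments foldr_max_ge {disp T A a0 s} h {a}.

Section QformSemantics.
Context {R : realType} {n : nat} {Dom : 'I_n -> Type} {V : Type}.
Local Notation qf := (qform R Dom V).
Local Open Scope ereal_scope.

Lemma qinterp_ge0 (G : qf) eta v : inED eta -> 0 <= qinterp G eta v.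
Proof.
move=> eta_ge0; elim/qform_nested_ind: G v => /=.
- by move=> j e v; exact: eta_ge0.
- by move=> t ht v; rewrite lee_fin.
- by move=> F1 F2 IH1 IH2 v; exact: adde_ge0.
- by move=> t ht F IH v; apply: mule_ge0; rewrite ?lee_fin.
- by move=> phi F1 F2 IH1 IH2 v; case: ifP.
- move=> F Fs IH v.
  by have [a /IH a_ge0 ->] := foldr_min_mem F Fs (fun G => qinterp G eta v).
- move=> F Fs IH v.
  by have [a /IH a_ge0 ->] := foldr_max_mem F Fs (fun G => qinterp G eta v).
Qed.

Lemma le_qinterp (G : qf) eta1 eta2 v :
  ple eta1 eta2 -> qinterp G eta1 v <= qinterp G eta2 v.
Proof.
move=> le_eta; elim/qform_nested_ind: G v => /=.
- by move=> j e v; exact: le_eta.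
- by [].
- by move=> F1 F2 IH1 IH2 v; exact: leeD.
- by move=> t ht F IH v; apply: lee_wpmul2l; rewrite ?lee_fin.
- by move=> phi F1 F2 IH1 IH2 v; case: ifP.
- by move=> F Fs IH v; apply: le_foldr_min => a /IH.
- by move=> F Fs IH v; apply: le_foldr_max => a /IH.
Qed.

Lemma qinterp_Dtrans_le (G : qf) eta v :
  qinterp (Dtrans G) eta v <= qinterp G eta v.
Proof.
elim/qform_nested_ind: G v => /=.
- by [].
- by move=> t ht v; rewrite lee_fin.
- by move=> F1 F2 IH1 IH2 v; exact: leeD.
- by move=> t ht F IH v; apply: lee_wpmul2l; rewrite ?lee_fin.
- by move=> phi F1 F2 IH1 IH2 v; case: ifP.
- by move=> F Fs IH v; rewrite foldr_map; apply: le_foldr_min => a /IH.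
- by move=> F Fs IH v; rewrite foldr_map; apply: le_foldr_max => a /IH.
Qed.

Lemma qinterp_DtransZ (G : qf) (lam : R) eta v : (0 <= lam)%R -> inED eta ->
  qinterp (Dtrans G) (fun z => lam%:E * eta z) v <= lam%:E * qinterp (Dtrans G) eta v.
Proof.
move=> lam_ge0 eta_ge0; have lamE_ge0 : 0 <= lam%:E by rewrite lee_fin.
elim/qform_nested_ind: G v => /=.
- by [].
- by move=> t ht v; rewrite mule0.
- move=> F1 F2 IH1 IH2 v; rewrite ge0_muleDr ?qinterp_ge0 //.
  exact: leeD.
- move=> t ht F IH v; rewrite muleCA.
  by apply: lee_wpmul2l; rewrite ?lee_fin.
- by move=> phi F1 F2 IH1 IH2 v; case: ifP.
- move=> F Fs IH v; rewrite !foldr_map.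
  have [a a_in ->] := foldr_min_mem F Fs (fun G => qinterp (Dtrans G) eta v).
  exact: le_trans (foldr_min_le _ a_in) (IH a a_in v).
- move=> F Fs IH v; rewrite !foldr_map.
  have [a a_in ->] := foldr_max_mem F Fs
    (fun G => qinterp (Dtrans G) (fun z => lam%:E * eta z) v).
  apply: le_trans (IH a a_in v) _; apply: lee_wpmul2l => //.
  exact: foldr_max_ge a_in.
Qed.

(* A min of sums is at most the min of the first summands plus the max of the
   second ones, hence the maxify. *)
Lemma qinterpD_le (G : qf) y d v : inED y -> inED d ->
  qinterp G (fun z => y z + d z) v <=
  qinterp G y v + qinterp (Dtrans (maxify G)) d v.
Proof.
move=> y_ge0 d_ge0; elim/qform_nested_ind: G v => /=.
- by [].
- by move=> t ht v; rewrite adde0.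
- by move=> F1 F2 IH1 IH2 v; rewrite addeACA; exact: leeD.
- move=> t ht F IH v; rewrite -ge0_muleDr ?qinterp_ge0 //.
  by apply: lee_wpmul2l; rewrite ?lee_fin.
- by move=> phi F1 F2 IH1 IH2 v; case: ifP.
- move=> F Fs IH v; rewrite !foldr_map.
  have [a a_in ->] := foldr_min_mem F Fs (fun G => qinterp G y v).
  apply: le_trans (foldr_min_le _ a_in) _; apply: le_trans (IH a a_in v) _.
  by apply: leeD => //; exact: foldr_max_ge a_in.
- move=> F Fs IH v; rewrite !foldr_map.
  have [a a_in ->] := foldr_max_mem F Fs (fun G => qinterp G (fun z => y z + d z) v).
  apply: le_trans (IH a a_in v) _.
  by apply: leeD; exact: foldr_max_ge a_in.
Qed.
End QformSemantics.

Section ExtendedRealBounds.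
Context {R : realType}.
Local Open Scope ereal_scope.

Lemma lee_divD1 (c : R) (x y z : \bar R) (w : R) : (0 < c)%R ->
  x <= c^-1%:E * y -> x <= z -> y + z <= w%:E -> x <= ((c + 1)^-1 * w)%:E.
Proof.
move=> c_gt0; have cV_gt0 : (0 < c^-1)%R by rewrite invr_gt0.
have cV_Ny : c^-1%:E * -oo = -oo by rewrite mulrNy gtr0_sg // mul1e.
have cV_y : c^-1%:E * +oo = +oo by rewrite mulry gtr0_sg // mul1e.
case: x y z => [x||] [y||] [z||]; rewrite ?cV_Ny ?cV_y ?leNye //.
rewrite -EFinM -EFinD !lee_fin => le_xy le_xz le_w.
have c1_gt0 : (0 < c + 1)%R by rewrite addr_gt0.
rewrite -(ler_pM2l c1_gt0) mulrA mulfV ?gt_eqF // mul1r.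
rewrite -(ler_pM2l c_gt0) mulrA mulfV ?gt_eqF // mul1r in le_xy.
nra.
Qed.

Lemma lee_addinvS (x y : \bar R) (r : R) :
  (forall k : nat, x <= y + ((k.+1)%:R^-1 * r)%:E) -> x <= y.
Proof.
move=> le_xy; apply/lee_addgt0Pr => e e_gt0.
have r1_gt0 : (0 < `|r| + 1)%R by rewrite ltr_pwDr.
have [k] := ltr_add_invr (divr_gt0 e_gt0 r1_gt0); rewrite add0r ltr_pdivlMr //.
move=> lt_e; apply: le_trans (le_xy k) _; apply: leeD => //; rewrite lee_fin.
apply: le_trans (ltW lt_e); rewrite ler_pM2l ?invr_gt0 //.
by rewrite (le_trans (ler_norm r)) // lerDl.
Qed.
End ExtendedRealBounds.

Lemma le_lfp (R : realType) (n : nat) (Dom : 'I_n -> Type)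
    (Phi : (Dsum Dom -> \bar R) -> Dsum Dom -> \bar R) (eta' : Dsum Dom -> \bar R) :
  (forall eta, inED eta -> ple (Phi eta) eta -> ple eta' eta) -> ple eta' (lfp Phi).
Proof.
by move=> le_pre d; apply/ereal_infP => _ [eta [eta_ge0 eta_pre] <-]; exact: le_pre.
Qed.

Section PreFixedPointBound.
Context {R : realType} {n : nat} {Dom : 'I_n -> Type}.
Context {E' : eqsys R Dom} {u eta eta' : Dsum Dom -> \bar R} {r : Dsum Dom -> R}.
Local Notation rE := (fun x => (r x)%:E).
Local Notation DE'max := (sys_interp (sys_D (sys_max E'))).
Hypotheses (u_ge0 : inED u) (u_pre : ple (sys_interp (sys_max E') u) u).
Hypothesis r_ge0 : forall d, (0 <= r d)%R.
Hypothesis r_bound : ple (fun d => DE'max rE d + u d)%E rE.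
Hypotheses (eta'_le_u : ple eta' u) (eta'_post : ple eta' (sys_interp E' eta')).
Hypotheses (eta_ge0 : inED eta) (eta_pre : ple (sys_interp E' eta) eta).
Local Open Scope ereal_scope.

Lemma le_pre_fixpoint_add_step (c : R) : (0 < c)%R ->
  ple eta' (fun d => eta d + (c^-1 * r d)%:E) ->
  ple eta' (fun d => eta d + ((c + 1)^-1 * r d)%:E).
Proof.
move=> c_gt0 le_eta' z.
pose dd x := Order.min (c^-1 * r x)%:E (u x).
have dd_ge0 : inED dd.
  by move=> x; rewrite /dd le_min (u_ge0 x) andbT lee_fin mulr_ge0 // invr_ge0 ltW.
have le_eta'_dd : ple eta' (fun x => eta x + dd x).
  move=> x; rewrite /dd minEle; case: ifP => _; first exact: le_eta'.
  exact: le_trans (eta'_le_u x) (lee_paddl (eta_ge0 x) (lexx _)).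
have Dd_le_r : DE'max dd z <= c^-1%:E * DE'max rE z.
  have rE_ge0 : inED rE by move=> x; rewrite lee_fin.
  have cV_ge0 : (0 <= c^-1)%R by rewrite invr_ge0 ltW.
  apply: le_trans (qinterp_DtransZ _ _ _ _ cV_ge0 rE_ge0).
  by apply: le_qinterp => x; rewrite /dd -EFinM ge_min lexx.
have Dd_le_u : DE'max dd z <= u z.
  apply: le_trans (u_pre z); apply: le_trans (qinterp_Dtrans_le _ _ _).
  by apply: le_qinterp => x; rewrite /dd ge_min lexx orbT.
apply: le_trans (eta'_post z) _.
apply: le_trans (le_qinterp _ _ _ _ le_eta'_dd) _.
apply: le_trans (qinterpD_le _ _ _ _ eta_ge0 dd_ge0) _.
by apply: leeD; [exact: eta_pre|exact: lee_divD1 c_gt0 Dd_le_r Dd_le_u (r_bound z)].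
Qed.

Lemma le_pre_fixpoint_add_invS k :
  ple eta' (fun d => eta d + ((k.+1)%:R^-1 * r d)%:E).
Proof.
elim: k => [|k IH] z.
  rewrite invr1 mul1r; apply: le_trans (eta'_le_u z) _.
  apply: le_trans (lee_paddl (eta_ge0 z) (lexx _)).
  apply: le_trans (r_bound z); apply: lee_paddl (lexx _).
  by apply: qinterp_ge0 => x; rewrite lee_fin.
by rewrite mulrSr; apply: le_pre_fixpoint_add_step.
Qed.

Lemma le_pre_fixpoint : ple eta' eta.
Proof.
by move=> z; apply: (lee_addinvS _ _ (r z)) => k; exact: le_pre_fixpoint_add_invS.
Qed.
End PreFixedPointBound.

Theorem corollaryE5 (R : realType) (n : nat) (Dom : 'I_n -> Type)
  (E : eqsys R Dom) (eta' : Dsum Dom -> \bar R) :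
  sys_maxfree E -> inED eta' ->
  (exists (E' : eqsys R Dom) (u : Dsum Dom -> \bar R) (r : Dsum Dom -> R),
      [/\ sys_maxfree E',
          (* (a) [[E']] <= [[E]] on E(D) *)
          (forall eta, inED eta -> ple (sys_interp E' eta) (sys_interp E eta)),
          (* (b) u in E(D), [[E'^max]](u) <= u *)
          inED u /\ ple (sys_interp (sys_max E') u) u,
          (* (c) r : D -> [0,oo), [[D E'^max]](r) + u <= r *)
          (forall d, 0 <= r d) /\
            ple (fun d => sys_interp (sys_D (sys_max E')) (fun x => (r x)%:E) d + u d)%E
                (fun d => (r d)%:E) &
          (* (d) eta' <= u and eta' <= [[E']](eta') *)
          ple eta' u /\ ple eta' (sys_interp E' eta')]) ->
  ple eta' (lfp (sys_interp E)).
Proof.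
move=> _ _ [E' [u [r [_ E'_le_E [u_ge0 u_pre] [r_ge0 r_bound] [eta'_le_u eta'_post]]]]].
apply: le_lfp => eta eta_ge0 eta_pre.
have eta_pre' : ple (sys_interp E' eta) eta.
  by move=> d; exact: le_trans (E'_le_E eta eta_ge0 d) (eta_pre d).
exact: le_pre_fixpoint u_ge0 u_pre r_ge0 r_bound eta'_le_u eta'_post eta_ge0 eta_pre'.
Qed.
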